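(* Let $a\ge b\ge2$ and $k$ be integers with $2a+3\le k\le 2a+2b-1$. Then for every $(i,j)\in Q_1$: - $w_1,w_4,w_5\in\mathcal{R}^k_{(a,b),(i,j)}$; - if moreover $b\ge\lceil a/2\rceil+2$ and $2a+3\le k\le a+2b-1$, then also $w_6\in\mathcal{R}^k_{(a,b),(i,j)}$.
   Context: $\widehat{\mathfrak{su}}(3)_k$ fusion. Let $P_+^k=\{(\lambda_1,\lambda_2)\in\mathbb{Z}_{\ge0}^2:\lambda_1+\lambda_2\le k\}$. For $\lambda,\mu,\nu\in P_+^k$ set - $\mathcal{A}=\tfrac13[2(\lambda_1+\mu_1+\nu_2)+\lambda_2+\mu_2+\nu_1]$, - $\mathcal{B}=\tfrac13[\lambda_1+\mu_1+\nu_2+2(\lambda_2+\mu_2+\nu_1)]$, - $k_0^{\max}=\min(\mathcal{A},\mathcal{B})$, - $k_0^{\min}=\max(\lambda_1+\lambda_2,\mu_1+\mu_2,\nu_1+\nu_2,\mathcal{A}-\lambda_1,\mathcal{A}-\mu_1,\mathcal{A}-\nu_2,\mathcal{B}-\lambda_2,\mathcal{B}-\mu_2,\mathcal{B}-\nu_1)$. The fusion multiplicity is $N^{(k)\nu}_{\lambda,\mu}=\min(k_0^{\max},k)-k_0^{\min}+1$ if $\mathcal{A},\mathcal{B}$ are nonnegative integers, $k_0^{\max}\ge k_0^{\min}$ and $k\ge k_0^{\min}$; otherwise it is $0$. The set $\mathcal{R}^k_{\lambda,\mu}$ is $\{\nu\in P_+^k:N^{(k)\nu}_{\lambda,\mu}\ne0\}$.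 The candidate weights are $w_1=(a-1,b+2)$, $w_2=(a+2,b-1)$, $w_3=(a+1,b-2)$, $w_4=(a-2,b+1)$, $w_5=(a+1,b+1)$, $w_6=(a-1,b-1)$. The set $Q_1$ is defined by $Q_1=\{(2k-3p,3p-k):p\in\mathbb{Z},\ \lceil(k+1)/2\rceil\le p\le\min(a+b,k-a-1,\lfloor2k/3\rfloor,\lfloor(b+k)/2\rfloor)\}$. *)

From mathcomp Require Import all_boot all_order all_algebra.
Set Implicit Arguments. Unset Strict Implicit. Unset Printing Implicit Defensive.
Import Order.TTheory GRing.Theory Num.Theory.
Local Open Scope ring_scope.

Definition weight := (int * int)%type.

Definition dominant (k : int) (l : weight) : bool :=
  [&& 0 <= l.1, 0 <= l.2 & l.1 + l.2 <= k].

Definition cA (l m n : weight) : rat :=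
  ((2 * (l.1 + m.1 + n.2) + l.2 + m.2 + n.1)%:~R) / 3.
Definition cB (l m n : weight) : rat :=
  ((l.1 + m.1 + n.2 + 2 * (l.2 + m.2 + n.1))%:~R) / 3.

Definition k0max (l m n : weight) : rat := Num.min (cA l m n) (cB l m n).

Definition k0min (l m n : weight) : rat :=
  let A := cA l m n in let B := cB l m n in
  \big[Num.max/(l.1 + l.2)%:~R]_(x <- [:: (m.1 + m.2)%:~R; (n.1 + n.2)%:~R;
       A - l.1%:~R; A - m.1%:~R; A - n.2%:~R;
       B - l.2%:~R; B - m.2%:~R; B - n.1%:~R]) x.

Definition fusion (k : int) (l m n : weight) : rat :=
  if [&& cA l m n \is a Num.nat, cB l m n \is a Num.nat,
         k0min l m n <= k0max l m n & k0min l m n <= k%:~R]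
  then Num.min (k0max l m n) k%:~R - k0min l m n + 1
  else 0.

(* nu \in R^k_{lambda,mu} *)
Definition inR (k : int) (l m n : weight) : bool :=
  dominant k n && (fusion k l m n != 0).

Definition w1 (a b : int) : weight := (a - 1, b + 2).
Definition w2 (a b : int) : weight := (a + 2, b - 1).
Definition w3 (a b : int) : weight := (a + 1, b - 2).
Definition w4 (a b : int) : weight := (a - 2, b + 1).
Definition w5 (a b : int) : weight := (a + 1, b + 1).
Definition w6 (a b : int) : weight := (a - 1, b - 1).

Definition inQ1 (a b k : int) (ij : weight) : Prop :=
  exists p : int,
    [/\ Num.ceil ((k + 1)%:~R / 2 : rat) <= p,
        (p <= a + b) /\ (p <= k - a - 1),
        p <= Num.floor ((2 * k)%:~R / 3 : rat),
        p <= Num.floor ((b + k)%:~R / 2 : rat)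
      & ij = (2 * k - 3 * p, 3 * p - k)].

From mathcomp Require Import all_boot all_order all_algebra.
From mathcomp Require Import zify lra.
Set Implicit Arguments. Unset Strict Implicit. Unset Printing Implicit Defensive.
Import Order.TTheory GRing.Theory Num.Theory.
Local Open Scope ring_scope.

(* For integral A and B the fusion multiplicity is nonzero as soon as A, B and
   k all dominate the nine lower bounds making up k0min, since k0max = min A B.
   For nu = w1, w4, w5, w6 and (i, j) = (2k - 3p, 3p - k) in Q_1 the values of
   A and B are explicit linear expressions in a, b, k, p, and these dominance
   conditions reduce to linear inequalities implied by the constraints on p. *)

Lemma ceil_div_le (x n c : int) : 0 < c ->
  (Num.ceil (x%:~R / c%:~R : rat) <= n) = (x <= n * c).
Proof. by move=> c_gt0; rewrite ceil_le_int ler_pdivrMr ?ltr0z // -intrM ler_int. Qed.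

Lemma le_floor_div (x n c : int) : 0 < c ->
  (n <= Num.floor (x%:~R / c%:~R : rat)) = (n * c <= x).
Proof. by move=> c_gt0; rewrite floor_ge_int ler_pdivlMr ?ltr0z // -intrM ler_int. Qed.

Lemma div3_int (x A : int) : x = 3 * A -> (x%:~R / 3 : rat) = A%:~R.
Proof. by move->; rewrite intrM mulrC mulrA mulVf ?mul1r. Qed.

Definition k0min_le (l m n : weight) (A B c : int) : bool :=
  [&& m.1 + m.2 <= c, n.1 + n.2 <= c,
      A - l.1 <= c, A - m.1 <= c, A - n.2 <= c,
      B - l.2 <= c, B - m.2 <= c, B - n.1 <= c & l.1 + l.2 <= c].

Lemma k0min_le_int (l m n : weight) (A B c : int) :
  cA l m n = A%:~R -> cB l m n = B%:~R ->
  k0min_le l m n A B c -> k0min l m n <= c%:~R.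
Proof.
move=> eA eB; rewrite /k0min eA eB !big_cons big_nil !ge_max -!intrB !ler_int.
exact: id.
Qed.

Lemma fusion_neq0 (k : int) (l m n : weight) :
  cA l m n \is a Num.nat -> cB l m n \is a Num.nat ->
  k0min l m n <= k0max l m n -> k0min l m n <= k%:~R ->
  fusion k l m n != 0.
Proof.
move=> An Bn le_max le_k; rewrite /fusion An Bn le_max le_k /=.
have : k0min l m n <= Num.min (k0max l m n) k%:~R by rewrite le_min le_max.
by move: (k0min _ _ _) (Num.min _ _) => u v le_uv; rewrite gt_eqF //; lra.
Qed.

Lemma inR_int (k : int) (l m n : weight) (A B : int) :
  2 * (l.1 + m.1 + n.2) + l.2 + m.2 + n.1 = 3 * A ->
  l.1 + m.1 + n.2 + 2 * (l.2 + m.2 + n.1) = 3 * B ->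
  0 <= A -> 0 <= B -> dominant k n ->
  k0min_le l m n A B A -> k0min_le l m n A B B -> k0min_le l m n A B k ->
  inR k l m n.
Proof.
move=> hA hB A_ge0 B_ge0 dom_n leA leB lek.
have eA : cA l m n = A%:~R by exact: div3_int.
have eB : cB l m n = B%:~R by exact: div3_int.
rewrite /inR dom_n fusion_neq0 ?(k0min_le_int eA eB) //.
- by rewrite eA -(gez0_abs A_ge0) natr_nat.
- by rewrite eB -(gez0_abs B_ge0) natr_nat.
- by rewrite /k0max le_min eA eB !(k0min_le_int eA eB).
Qed.

Lemma inQ1P (a b k : int) (ij : weight) : inQ1 a b k ij ->
  exists2 p : int, [/\ k + 1 <= 2 * p, p <= a + b, p <= k - a - 1,
                       3 * p <= 2 * k & 2 * p <= b + k]
                 & ij = (2 * k - 3 * p, 3 * p - k).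
Proof.
case=> p [le_ceil [le_ab le_ka] le_floor3 le_floor2 ->]; exists p => //.
move: le_ceil le_floor3 le_floor2.
rewrite -[2 : rat]/((2 : int)%:~R) -[3 : rat]/((3 : int)%:~R).
by rewrite ceil_div_le // !le_floor_div //; split; lia.
Qed.

Theorem mainTheorem7 (a b k : int) :
  b <= a -> 2 <= b -> 2 * a + 3 <= k -> k <= 2 * a + 2 * b - 1 ->
  forall ij : weight, inQ1 a b k ij ->
    [/\ inR k (a, b) ij (w1 a b), inR k (a, b) ij (w4 a b),
        inR k (a, b) ij (w5 a b)
      & (Num.ceil (a%:~R / 2 : rat) + 2 <= b -> k <= a + 2 * b - 1 ->
         inR k (a, b) ij (w6 a b))].
Proof.
move=> le_ba b_ge2 k_ge k_le ij /inQ1P[p [? ? ? ? ?] ->]; split.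
- apply: (inR_int (A := a + b + k - p + 1) (B := a + b + p));
  by rewrite /k0min_le /dominant /=; lia.
- apply: (inR_int (A := a + b + k - p) (B := a + b + p - 1));
  by rewrite /k0min_le /dominant /=; lia.
- apply: (inR_int (A := a + b + k - p + 1) (B := a + b + p + 1));
  by rewrite /k0min_le /dominant /=; lia.
move=> le_ceil k_le'.
have : Num.ceil (a%:~R / 2%:~R : rat) <= b - 2 by rewrite lerBrDr.
rewrite ceil_div_le // => a_le.
apply: (inR_int (A := a + b + k - p - 1) (B := a + b + p - 1));
  by rewrite /k0min_le /dominant /=; lia.
Qed.
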